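(* Let $X\in\mathbb R^{n\times d}$ ($d\ge n$) with $XX^\top$ nonsingular, $\Sigma$ symmetric positive definite, $\sigma>0$, and $\rho\in D:=\{\rho\ge0:\Sigma-\frac\rho dX^\top X\succ0\}$. Then $$\mathcal P(A(\rho,\Sigma);\Sigma)-\mathcal P(A(0,\Sigma);\Sigma)=\frac{\rho^2\sigma^4}{d}\mathrm{Tr}\Big(\big(\Sigma-\tfrac\rho dX^\top X\big)^{-1}\Sigma\big(\Sigma-\tfrac\rho dX^\top X\big)^{-1}X^\top X(X^\top X+d\sigma^2I)^{-1}\Big),$$ and $$\mathcal T(A(\rho,\Sigma);\Sigma)=\frac{d\sigma^4}{n}\mathrm{Tr}\Big(\Sigma\big(\Sigma-\tfrac\rho dX^\top X\big)^{-1}X^\top X\big(\Sigma-\tfrac\rho dX^\top X\big)^{-1}\Sigma(X^\top X)^\dagger(X^\top X+d\sigma^2I)^{-1}\Big).$$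
   Context: $\mathcal P(A;\Sigma):=\frac1d\|\Sigma^{1/2}(AX-I)\|_F^2+\sigma^2\|\Sigma^{1/2}A\|_F^2$, $\mathcal T(A;\Sigma):=\frac1{nd}\|XAX-X\|_F^2+\frac{\sigma^2}{n}\|XA-I\|_F^2$, and $A(\rho,\Sigma):=\big(I-\rho\sigma^2(\Sigma-\frac\rho dX^\top X)^{-1}\big)(X^\top X+d\sigma^2I)^{-1}X^\top$. $(\cdot)^\dagger$ is the Moore–Penrose pseudoinverse. *)

From HB Require Import structures.
From mathcomp Require Import all_boot all_order all_algebra.
From Stdlib Require Import ClassicalEpsilon.
Set Implicit Arguments. Unset Strict Implicit. Unset Printing Implicit Defensive.
Import Order.TTheory GRing.Theory Num.Theory.
Local Open Scope ring_scope.

Section Defs.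
Variable R : rcfType.

Definition frob (m p : nat) (M : 'M[R]_(m, p)) : R :=
  Num.sqrt (\sum_(i < m) \sum_(j < p) (M i j) ^+ 2).

Definition symmetric (k : nat) (S : 'M[R]_k) : Prop := S^T = S.

Definition posdef (k : nat) (S : 'M[R]_k) : Prop :=
  symmetric S /\ forall v : 'cV[R]_k, v != 0 -> 0 < (v^T *m S *m v) 0 0.

Definition possemidef (k : nat) (S : 'M[R]_k) : Prop :=
  symmetric S /\ forall v : 'cV[R]_k, 0 <= (v^T *m S *m v) 0 0.

Definition is_sqrtm (k : nat) (S Sigma : 'M[R]_k) : Prop :=
  possemidef S /\ S *m S = Sigma.

Definition is_pinv (m p : nat) (M : 'M[R]_(m, p)) (Mp : 'M[R]_(p, m)) : Prop :=
  [/\ M *m Mp *m M = M, Mp *m M *m Mp = Mp,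
      (M *m Mp)^T = M *m Mp & (Mp *m M)^T = Mp *m M].

Definition pinv (m p : nat) (M : 'M[R]_(m, p)) : 'M[R]_(p, m) :=
  epsilon (inhabits 0) (is_pinv M).

Definition Amat (n d : nat) (X : 'M[R]_(n, d)) (sigma rho : R) (Sigma : 'M[R]_d)
  : 'M[R]_(d, n) :=
  (1%:M - (rho * sigma ^+ 2) *: invmx (Sigma - (rho / d%:R) *: (X^T *m X)))
    *m invmx (X^T *m X + (d%:R * sigma ^+ 2) *: 1%:M) *m X^T.

(* P(A; Sigma), with Sh = Sigma^{1/2} *)
Definition Pcal (n d : nat) (X : 'M[R]_(n, d)) (sigma : R) (Sh : 'M[R]_d)
  (A : 'M[R]_(d, n)) : R :=
  d%:R^-1 * frob (Sh *m (A *m X - 1%:M)) ^+ 2 + sigma ^+ 2 * frob (Sh *m A) ^+ 2.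

Definition Tcal (n d : nat) (X : 'M[R]_(n, d)) (sigma : R) (A : 'M[R]_(d, n)) : R :=
  (n%:R * d%:R)^-1 * frob (X *m A *m X - X) ^+ 2
  + sigma ^+ 2 / n%:R * frob (X *m A - 1%:M) ^+ 2.

End Defs.

From mathcomp Require Import all_boot all_order all_algebra.
From Stdlib Require Import ClassicalEpsilon.
From mathcomp Require Import ring.

(* Write W := X X^T + d sigma^2 I.  The ridge estimator A(0, Sigma) =
   (X^T X + d sigma^2 I)^-1 X^T = X^T W^-1 solves the normal equation A W = X^T,
   and d P(B; Sigma) = tr (((B X - I)(B X - I)^T + d sigma^2 B B^T) Sigma) is a
   quadratic function of B with second-order part B W B^T.  Hence the excess risk
   of A(rho, Sigma) = A(0, Sigma) + E, where E = - rho sigma^2 M^-1 X^T W^-1 and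
   M = Sigma - (rho/d) X^T X, is tr (E W E^T Sigma) / d.  For T, the splitting
   Sigma = M + (rho/d) X^T X gives
   X A(rho, Sigma) - I = - d sigma^2 X M^-1 Sigma X^T (X X^T)^-1 W^-1,
   and (X^T X)^+ = X^T (X X^T)^-2 X identifies the resulting trace. *)

Set Implicit Arguments.
Unset Strict Implicit.
Unset Printing Implicit Defensive.
Import Order.TTheory GRing.Theory Num.Theory.
Local Open Scope ring_scope.

Section GramShift.
Variables (R : comPzRingType) (n d : nat) (X : 'M[R]_(n, d)) (c : R).

Lemma mulmx_trmxD m k (U V : 'M[R]_(m, k)) :
  (U + V) *m (U + V)^T = U *m U^T + (U *m V^T + V *m U^T) + V *m V^T.
Proof. by rewrite linearD /= !(mulmxDl, mulmxDr) addrA -(addrA _ (U *m V^T)). Qed.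

Lemma mulmx_gram_shift k (F : 'M[R]_(k, n)) :
  F *m X *m (F *m X)^T + c *: (F *m F^T) = F *m (X *m X^T + c *: 1%:M) *m F^T.
Proof.
by rewrite mulmxDr mulmxDl mulmxA -scalemxAr mulmx1 -scalemxAl trmx_mul !mulmxA.
Qed.

Definition ridge_gram (B : 'M[R]_(d, n)) : 'M[R]_d :=
  (B *m X - 1%:M) *m (B *m X - 1%:M)^T + c *: (B *m B^T).

Lemma ridge_gram_shift (Y E : 'M[R]_(d, n)) :
  Y *m (X *m X^T + c *: 1%:M) = X^T ->
  ridge_gram (Y + E) = ridge_gram Y + E *m (X *m X^T + c *: 1%:M) *m E^T.
Proof.
move=> YW; rewrite /ridge_gram (mulmxDl Y E X) addrAC; set U := Y *m X - 1%:M.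
have Z0 : U *m X^T + c *: Y = 0.
  by rewrite mulmxBl mul1mx addrAC -mulmxA -[c *: Y]mulmx1 -scalemxAl scalemxAr
    -mulmxDr YW subrr.
clearbody U; rewrite !mulmx_trmxD !scalerDr addrACA (addrACA (U *m U^T)).
have -> : U *m (E *m X)^T + E *m X *m U^T + (c *: (Y *m E^T) + c *: (E *m Y^T))
    = (U *m X^T + c *: Y) *m E^T + E *m (U *m X^T + c *: Y)^T.
  rewrite mulmxDl linearD /= mulmxDr linearZ /= !trmx_mul trmxK -scalemxAl -scalemxAr.
  by rewrite !mulmxA addrACA.
by rewrite Z0 mul0mx trmx0 mulmx0 !addr0 mulmx_gram_shift.
Qed.

End GramShift.

Lemma invmx_intertwine (R : comUnitRingType) m k (A : 'M[R]_m) (B : 'M[R]_k) C :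
  A \in unitmx -> B \in unitmx -> A *m C = C *m B -> invmx A *m C = C *m invmx B.
Proof.
move=> uA uB AC; apply: (canRL (mulmxK uB)).
by rewrite -mulmxA -AC mulmxA mulVmx // mul1mx.
Qed.

Section GramUnit.
Variable R : realFieldType.

Lemma mulmx_trmxE k (w : 'rV[R]_k) : (w *m w^T) 0 0 = \sum_i w 0 i ^+ 2.
Proof. by rewrite mxE; apply: eq_bigr => i _; rewrite mxE expr2. Qed.

Lemma mulmx_trmx_ge0 k (w : 'rV[R]_k) : 0 <= (w *m w^T) 0 0.
Proof. by rewrite mulmx_trmxE sumr_ge0 // => i _; apply: sqr_ge0. Qed.

Lemma mulmx_trmx_gt0 k (w : 'rV[R]_k) : w != 0 -> 0 < (w *m w^T) 0 0.
Proof.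
move=> w_neq0; rewrite lt_neqAle mulmx_trmx_ge0 andbT mulmx_trmxE.
apply: contra w_neq0; rewrite eq_sym psumr_eq0 => [/allP w0|i _]; last exact: sqr_ge0.
apply/eqP/rowP => i; rewrite mxE; apply/eqP.
by rewrite -sqrf_eq0; apply: w0; rewrite mem_index_enum.
Qed.

Lemma unitmx_gram_shift a b (Y : 'M[R]_(a, b)) c : 0 < c ->
  Y^T *m Y + c *: 1%:M \in unitmx.
Proof.
move=> c_gt0; rewrite unitmxE unitfE; apply/negP => /det0P [v v_neq0 vW0].
have := mulmx_gram_shift (Y^T) c v; rewrite trmxK vW0 mul0mx => gram0.
have : 0 < (v *m Y^T *m (v *m Y^T)^T + c *: (v *m v^T)) 0 0.
  rewrite mxE [(c *: _ : 'M_1) 0 0]mxE.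
  by rewrite ltr_wpDl ?mulmx_trmx_ge0 ?mulr_gt0 ?mulmx_trmx_gt0.
by rewrite gram0 mxE ltxx.
Qed.

Lemma invmx_gram_shift_trmx a b (Y : 'M[R]_(a, b)) c : 0 < c ->
  invmx (Y^T *m Y + c *: 1%:M) *m Y^T = Y^T *m invmx (Y *m Y^T + c *: 1%:M).
Proof.
move=> c_gt0; apply: invmx_intertwine; rewrite ?unitmx_gram_shift //.
  by rewrite -{1}(trmxK Y) unitmx_gram_shift.
by rewrite mulmxDl mulmxDr -scalemxAl -scalemxAr mul1mx mulmx1 mulmxA.
Qed.

End GramUnit.

Section FrobeniusPinv.
Variable R : rcfType.

Lemma frob_sqr m p (A : 'M[R]_(m, p)) : frob A ^+ 2 = \tr (A *m A^T).
Proof.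
rewrite /frob sqr_sqrtr; last by do 2![apply: sumr_ge0 => ? _]; apply: sqr_ge0.
by apply: eq_bigr => i _; rewrite !mxE; apply: eq_bigr => j _; rewrite mxE expr2.
Qed.

Lemma frob_sqrtm_mul k m (S Sh : 'M[R]_k) (B : 'M[R]_(k, m)) :
  is_sqrtm Sh S -> frob (Sh *m B) ^+ 2 = \tr (B *m B^T *m S).
Proof.
case=> [[Sh_sym _] <-]; rewrite frob_sqr trmx_mul Sh_sym mxtrace_mulC !mulmxA.
by rewrite mxtrace_mulC !mulmxA.
Qed.

Lemma posdef_unitmx k (S : 'M[R]_k) : posdef S -> S \in unitmx.
Proof.
case=> _ S_pos; rewrite unitmxE unitfE; apply/negP => /det0P [v v_neq0 vS0].
by have := S_pos v^T; rewrite trmx_eq0 v_neq0 trmxK vS0 mul0mx mxE ltxx => /(_ isT).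
Qed.

Lemma is_pinv_uniq m p (A : 'M[R]_(m, p)) B C : is_pinv A B -> is_pinv A C -> B = C.
Proof.
case=> [ABA BAB AB_sym BA_sym] [ACA CAC AC_sym CA_sym].
have AB_AC : A *m B = A *m C.
  by rewrite -AB_sym -{1}ACA -mulmxA trmx_mul AB_sym AC_sym mulmxA ABA.
have BA_CA : B *m A = C *m A.
  by rewrite -BA_sym -{1}ACA !mulmxA -mulmxA trmx_mul BA_sym CA_sym -mulmxA
    (mulmxA A B A) ABA.
by rewrite -BAB -mulmxA AB_AC mulmxA BA_CA CAC.
Qed.

Lemma pinvE m p (A : 'M[R]_(m, p)) B : is_pinv A B -> pinv A = B.
Proof.
move=> AB; apply: (is_pinv_uniq _ AB).
exact: (epsilon_spec (inhabits 0) (is_pinv A) (ex_intro _ B AB)).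
Qed.

Lemma pinv_gram m p (X : 'M[R]_(m, p)) : X *m X^T \in unitmx ->
  pinv (X^T *m X) = X^T *m invmx (X *m X^T) *m invmx (X *m X^T) *m X.
Proof.
move=> XXt_unit; set Q := invmx (X *m X^T).
have Q_sym : Q^T = Q by rewrite /Q trmx_inv trmx_mul trmxK.
have XtXXtQ : X^T *m X *m X^T *m Q = X^T.
  by rewrite -(mulmxA X^T) -mulmxA mulmxV // mulmx1.
have XtQXXt : X^T *m Q *m X *m X^T = X^T.
  by rewrite -(mulmxA _ X) -mulmxA mulVmx // mulmx1.
have GP : X^T *m X *m (X^T *m Q *m Q *m X) = X^T *m Q *m X by rewrite !mulmxA XtXXtQ.
have PG : X^T *m Q *m Q *m X *m (X^T *m X) = X^T *m Q *m X.
  by rewrite !mulmxA -(mulmxA _ X X^T) -(mulmxA _ Q) mulVmx // mulmx1.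
apply: pinvE; split; rewrite ?GP ?PG ?mulmxA ?XtQXXt //.
all: by rewrite !trmx_mul trmxK Q_sym mulmxA.
Qed.

Lemma Pcal_ridge_gram n d (X : 'M[R]_(n, d)) (sigma : R) (Sigma Sh : 'M[R]_d) B :
  d != 0%N -> is_sqrtm Sh Sigma ->
  Pcal X sigma Sh B = d%:R^-1 * \tr (ridge_gram X (d%:R * sigma ^+ 2) B *m Sigma).
Proof.
move=> d_neq0 ShS; rewrite /Pcal !(frob_sqrtm_mul _ ShS) /ridge_gram.
rewrite (mulmxDl _ (_ *: _)).
by rewrite -scalemxAl mxtraceD mxtraceZ mulrDr !mulrA mulVf ?mul1r ?pnatr_eq0.
Qed.

Lemma Tcal_gram n d (X : 'M[R]_(n, d)) (sigma : R) B : d != 0%N ->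
  Tcal X sigma B = (n%:R * d%:R)^-1 * \tr ((X *m B - 1%:M)
    *m (X *m X^T + (d%:R * sigma ^+ 2) *: 1%:M) *m (X *m B - 1%:M)^T).
Proof.
move=> d_neq0; have dR : d%:R != 0 :> R by rewrite pnatr_eq0.
rewrite /Tcal; have -> : X *m B *m X - X = (X *m B - 1%:M) *m X by rewrite mulmxBl mul1mx.
rewrite -mulmx_gram_shift mxtraceD mxtraceZ !frob_sqr mulrDr mulrA.
by congr (_ + _); congr (_ * _); rewrite invfM -[RHS]mulrA mulKf // mulrC.
Qed.

End FrobeniusPinv.

Section RidgeEstimator.
Variables (R : rcfType) (n d : nat) (X : 'M[R]_(n, d)) (Sigma : 'M[R]_d) (sigma rho : R).
Hypotheses (d_neq0 : d != 0%N) (XXt_unit : X *m X^T \in unitmx)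
  (Sigma_sym : Sigma^T = Sigma) (sigma_gt0 : 0 < sigma)
  (M_posdef : posdef (Sigma - (rho / d%:R) *: (X^T *m X))).

Local Notation M := (Sigma - (rho / d%:R) *: (X^T *m X)).
Local Notation c := (d%:R * sigma ^+ 2).
Local Notation W := (X *m X^T + c *: 1%:M).
Local Notation K := (invmx (X^T *m X + c *: 1%:M)).

Let c_gt0 : 0 < c.
Proof. by rewrite mulr_gt0 ?exprn_gt0 // ltr0n lt0n. Qed.

Let W_unit : W \in unitmx.
Proof. by rewrite -{1}(trmxK X) unitmx_gram_shift. Qed.

Let W_sym : W^T = W.
Proof. by rewrite linearD /= trmx_mul trmxK linearZ /= trmx1. Qed.

Let M_unit : M \in unitmx.
Proof. exact: posdef_unitmx. Qed.

Let M_sym : M^T = M.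
Proof. by case: M_posdef. Qed.

Let invmx_M_Sigma : invmx M *m Sigma = 1%:M + (rho / d%:R) *: (invmx M *m (X^T *m X)).
Proof.
have Sigma_split : Sigma = M + (rho / d%:R) *: (X^T *m X) by rewrite subrK.
by rewrite {2}Sigma_split mulmxDr mulVmx // -scalemxAr.
Qed.

Lemma AmatE r : Amat X sigma r Sigma =
  (1%:M - (r * sigma ^+ 2) *: invmx (Sigma - (r / d%:R) *: (X^T *m X))) *m (X^T *m invmx W).
Proof. by rewrite /Amat -mulmxA invmx_gram_shift_trmx. Qed.

Let invmx_W_X : invmx W *m X = X *m K.
Proof. by have := invmx_gram_shift_trmx X^T c_gt0; rewrite trmxK. Qed.

Lemma Pcal_Amat_gap Sh : is_sqrtm Sh Sigma ->
  Pcal X sigma Sh (Amat X sigma rho Sigma) - Pcal X sigma Sh (Amat X sigma 0 Sigma)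
    = rho ^+ 2 * sigma ^+ 4 / d%:R
      * \tr (invmx M *m Sigma *m invmx M *m (X^T *m X) *m K).
Proof.
move=> ShS; set A0 := X^T *m invmx W; set k := rho * sigma ^+ 2.
have A0W : A0 *m W = X^T by rewrite mulmxKV.
have -> : Amat X sigma rho Sigma = A0 + (- k) *: (invmx M *m A0).
  by rewrite AmatE -/A0 -/k mulmxBl mul1mx scaleNr -scalemxAl.
have -> : Amat X sigma 0 Sigma = A0 by rewrite AmatE mul0r scale0r subr0 mul1mx.
rewrite !(Pcal_ridge_gram _ _ _ d_neq0 ShS) ridge_gram_shift // mulmxDl mxtraceD.
rewrite mulrDr addrAC subrr add0r.
have -> : (- k) *: (invmx M *m A0) *m W *m ((- k) *: (invmx M *m A0))^T
    = k ^+ 2 *: (invmx M *m X^T *m X *m K *m invmx M).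
  rewrite [(_ *: _)^T]linearZ /= -!scalemxAl -scalemxAr scalerA mulrNN -expr2.
  congr (_ *: _).
  by rewrite -(mulmxA _ A0) A0W !trmx_mul !trmx_inv W_sym M_sym trmxK invmx_W_X !mulmxA.
rewrite -scalemxAl mxtraceZ.
have -> : \tr (invmx M *m X^T *m X *m K *m invmx M *m Sigma)
    = \tr (invmx M *m Sigma *m invmx M *m (X^T *m X) *m K).
  by rewrite -mulmxA mxtrace_mulC !mulmxA.
by rewrite /k; ring.
Qed.

Let invmx_W_invmx_XXt : invmx W *m invmx (X *m X^T) = invmx (X *m X^T) *m invmx W.
Proof.
have XXt_W : X *m X^T *m W = W *m (X *m X^T).
  by rewrite mulmxDr mulmxDl -scalemxAr -scalemxAl mulmx1 mul1mx.
apply: invmx_intertwine => //; apply/esym.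
exact: invmx_intertwine.
Qed.

Let invmx_M_Sigma_sandwich : X *m invmx M *m Sigma *m X^T *m invmx (X *m X^T)
  = 1%:M + (rho / d%:R) *: (X *m invmx M *m X^T).
Proof.
rewrite -(mulmxA X) invmx_M_Sigma mulmxDr mulmx1 !mulmxDl -!scalemxAr -!scalemxAl.
by rewrite mulmxV // !mulmxA -(mulmxA _ X X^T) -(mulmxA _ (X *m X^T)) mulmxV // mulmx1.
Qed.

Lemma mulmx_Amat_subr1 : X *m Amat X sigma rho Sigma - 1%:M
  = - c *: (X *m invmx M *m Sigma *m X^T *m invmx (X *m X^T) *m invmx W).
Proof.
rewrite (scalemxAl (- c)) -[LHS](mulmxK W_unit); congr (_ *m _).
rewrite invmx_M_Sigma_sandwich mulmxBl mul1mx AmatE -!mulmxA mulVmx // mulmx1.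
rewrite mulmxBl mul1mx mulmxBr -scalemxAl -scalemxAr.
have c_rho : c * (rho / d%:R) = rho * sigma ^+ 2 by field; rewrite pnatr_eq0.
by rewrite scalerDr scalerA mulNr c_rho !scaleNr opprD addrACA subrr add0r addrC.
Qed.

Lemma Tcal_Amat : Tcal X sigma (Amat X sigma rho Sigma)
  = d%:R * sigma ^+ 4 / n%:R
    * \tr (Sigma *m invmx M *m (X^T *m X) *m invmx M *m Sigma *m pinv (X^T *m X) *m K).
Proof.
rewrite (Tcal_gram _ _ _ d_neq0) mulmx_Amat_subr1 pinv_gram //.
set Q := invmx (X *m X^T); set S := X *m invmx M *m Sigma *m X^T *m Q.
have -> : (- c) *: (S *m invmx W) *m W *m ((- c) *: (S *m invmx W))^T
    = c ^+ 2 *: (S *m invmx W *m S^T).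
  rewrite [(_ *: _)^T]linearZ /= -!scalemxAl -scalemxAr scalerA mulrNN -expr2.
  by rewrite mulmxKV // trmx_mul trmx_inv W_sym mulmxA.
have -> : Sigma *m invmx M *m (X^T *m X) *m invmx M *m Sigma *m (X^T *m Q *m Q *m X) *m K
    = (Sigma *m invmx M *m X^T) *m (S *m (Q *m invmx W) *m X).
  by rewrite -mulmxA -(mulmxA _ X) -invmx_W_X /S !mulmxA.
have S_tr : S^T = Q *m X *m Sigma *m invmx M *m X^T.
  by rewrite /S !trmx_mul !trmx_inv trmx_mul trmxK Sigma_sym M_sym !mulmxA.
rewrite -invmx_W_invmx_XXt mxtrace_mulC S_tr mxtraceZ !mulmxA -/Q.
have dc : d%:R^-1 * c ^+ 2 = d%:R * sigma ^+ 4 by field; rewrite pnatr_eq0.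
by rewrite mulrA invfM -(mulrA n%:R^-1) dc [n%:R^-1 * _]mulrC.
Qed.

End RidgeEstimator.

Theorem lemma3 (R : rcfType) (n d : nat) (X : 'M[R]_(n, d))
  (Sigma Sh : 'M[R]_d) (sigma rho : R) :
  (n <= d)%N ->
  X *m X^T \in unitmx ->
  posdef Sigma ->
  is_sqrtm Sh Sigma ->
  0 < sigma ->
  0 <= rho ->
  posdef (Sigma - (rho / d%:R) *: (X^T *m X)) ->
  let M := Sigma - (rho / d%:R) *: (X^T *m X) in
  let G := X^T *m X in
  let K := invmx (G + (d%:R * sigma ^+ 2) *: 1%:M) in
  Pcal X sigma Sh (Amat X sigma rho Sigma) - Pcal X sigma Sh (Amat X sigma 0 Sigma)
    = rho ^+ 2 * sigma ^+ 4 / d%:R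
      * \tr (invmx M *m Sigma *m invmx M *m G *m K)
  /\
  Tcal X sigma (Amat X sigma rho Sigma)
    = d%:R * sigma ^+ 4 / n%:R
      * \tr (Sigma *m invmx M *m G *m invmx M *m Sigma *m pinv G *m K).
Proof.
move=> le_nd XXt_unit [Sigma_sym _] ShS sigma_gt0 _ M_posdef M G K.
have [d0 | d_neq0] := eqVneq d 0%N.
  subst d; move: le_nd; rewrite leqn0 => /eqP n0; subst n.
  have frob0 p (A : 'M[R]_(0, p)) : frob A = 0 by rewrite /frob big_ord0 sqrtr0.
  have Pcal0 B : Pcal X sigma Sh B = 0 by rewrite /Pcal !frob0; ring.
  have Tcal0 B : Tcal X sigma B = 0 by rewrite /Tcal !frob0; ring.
  have tr0 (A : 'M[R]_0) : \tr A = 0 by rewrite [A]flatmx0 mxtrace0.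
  by rewrite !Pcal0 Tcal0 !tr0 subrr !mulr0.
split; [exact: Pcal_Amat_gap | exact: Tcal_Amat].
Qed.
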